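(* Assume the instance is non-degenerate and let $x\in S\cap\mathbb{R}^n$ be such that the (underlying undirected graph of the) tangent digraph $\mathcal{G}(x)$ is a spanning tree. If $x$ is not a local optimum, then there exists $e\in E^\circ(x)$ such that $V(\mathcal{T}(e,x))$ is a feasible descent direction at $x$.
   Context: $\mathbb{R}_{\max}=\mathbb{R}\cup\{-\infty\}$, $\chi_J$ the indicator vector of $J$. Data: $A^\pm=(a^\pm_{i,j})\in\mathbb{R}_{\max}^{m\times n}$, $C=(c_{k,j})\in\mathbb{R}_{\max}^{p\times n}$, $\mu^+\in\mathbb{Z}_{\ge0}^p$, $\mu^-\in\mathbb{Z}_{\ge0}^n$; $A=(a_{i,j})$, $a_{i,j}=\max(a^+_{i,j},a^-_{i,j})$. $f(x)=\sum_k\mu^+_k\max_j(c_{k,j}+x_j)-\sum_j\mu^-_jx_j$; $S=\{x:\max_j(a^+_{i,j}+x_j)\ge\max_j(a^-_{i,j}+x_j)\ \forall i\}$. Standing assumptions: each row of $A$ and $C$ has a finite entry; $\sum_k\mu^+_k=\sum_j\mu^-_j$; the undirected graph on $\{u_k\}\cup[n]\cup\{w_i\}$ with edges $\{u_k,j\}$ ($c_{k,j}\ne-\infty$), $\{w_i,j\}$ ($a_{i,j}\ne-\infty$) is connected. Non-degenerate: no square submatrix of $Q$ ($C$ stacked above $A$) with finite tropical determinant $\max_\sigma\sum_iq_{i,\sigma(i)}$ has two permutations attaining that maximum. $x\in S\cap\mathbb{R}^n$ is a local optimum if there is $\delta>0$ with $f(y)\ge f(x)$ for all $y\in S\cap\mathbb{R}^n$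 with $\max_j|x_j-y_j|<\delta$. $\epsilon(x)$ is the smallest positive value among $|(a_{i,j_1}+x_{j_1})-(a_{i,j_2}+x_{j_2})|$ and $|(c_{k,j_1}+x_{j_1})-(c_{k,j_2}+x_{j_2})|$; $J\subset[n]$ is a feasible descent direction at $x$ if $x+\delta\chi_J\in S$ and $f(x+\delta\chi_J)<f(x)$ for all $0<\delta<\epsilon(x)$. Tangent digraph $\mathcal{G}(x)$: vertices $U=\{u_1..u_p\}$, $V=[n]$, $W=\{w_1..w_m\}$; $E_1(x)=\{(u_k,j):\max_{j'}(c_{k,j'}+x_{j'})=c_{k,j}+x_j\}$, $E_2(x)=\{(w_i,j):\max_{j'}(a_{i,j'}+x_{j'})=a^-_{i,j}+x_j\}$, $E_3(x)=\{(j,w_i):\max_{j'}(a_{i,j'}+x_{j'})=a^+_{i,j}+x_j\}$. $\mathcal{N}^-_V(w_i,x)=\{j:(j,w_i)\in E_3(x)\}$; $E^\circ(x)=E_1(x)\cup E_2(x)\cup\{(j,w_i)\in E_3(x):|\mathcal{N}^-_V(w_i,x)|\ge2\}$. For an edge $e$, removing $e$ from the tree $\mathcal{G}(x)$ leaves two trees, and $\mathcal{T}(e,x)$ is the one containing the endpoint of $e$ in $U\cup W$; $V(\mathcal{T}(e,x))$ is its vertex set in $V$. *)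

From HB Require Import structures.
From mathcomp Require Import all_boot all_order all_algebra perm.
From mathcomp Require Import reals.

Set Implicit Arguments.
Unset Strict Implicit.
Unset Printing Implicit Defensive.

Import Order.TTheory GRing.Theory Num.Theory.
Local Open Scope ring_scope.

(* Max-plus semiring R_max = R ∪ {-oo}, encoded as option R with None = -oo. *)
Section TropLP.
Variable R : realType.

Definition omax (a b : option R) : option R :=
  match a, b with
  | None, _ => b
  | _, None => a
  | Some x, Some y => Some (Num.max x y)
  end.

Definition oadd (a b : option R) : option R :=
  match a, b with
  | Some x, Some y => Some (x + y)
  | _, _ => None
  end.

Definition ole (a b : option R) : bool :=
  match a, b with
  | None, _ => true
  | Some _, None => false
  | Some x, Some y => x <= y
  end.

Variables m n p : nat.

Record instance := Instance {
  Ap  : 'I_m -> 'I_n -> option R;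
  Am  : 'I_m -> 'I_n -> option R;
  Cm  : 'I_p -> 'I_n -> option R;
  mup : 'I_p -> nat;
  mum : 'I_n -> nat }.

Variable I : instance.

Definition tmaxv (a : 'I_n -> option R) (x : 'I_n -> R) : option R :=
  \big[omax/None]_(j < n) omap (fun v => v + x j) (a j).

Definition Aent (i : 'I_m) (j : 'I_n) : option R := omax (Ap I i j) (Am I i j).

Definition fobj (x : 'I_n -> R) : R :=
  \sum_(k < p) (mup I k)%:R * odflt 0 (tmaxv (Cm I k) x)
  - \sum_(j < n) (mum I j)%:R * x j.

Definition inS (x : 'I_n -> R) : Prop :=
  forall i : 'I_m, ole (tmaxv (Am I i) x) (tmaxv (Ap I i) x).

Definition rows_finite : Prop :=
  (forall i : 'I_m, exists j : 'I_n, Aent i j != None) /\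
  (forall k : 'I_p, exists j : 'I_n, Cm I k j != None).

Definition balanced : Prop := (\sum_(k < p) mup I k = \sum_(j < n) mum I j)%N.

Definition vertex := ('I_p + 'I_n + 'I_m)%type.
Definition vu (k : 'I_p) : vertex := inl (inl k).
Definition vv (j : 'I_n) : vertex := inl (inr j).
Definition vw (i : 'I_m) : vertex := inr i.

Definition data_adj : rel vertex := fun a b =>
  match a, b with
  | inl (inl k), inl (inr j) => Cm I k j != None
  | inl (inr j), inl (inl k) => Cm I k j != None
  | inr i, inl (inr j) => Aent i j != None
  | inl (inr j), inr i => Aent i j != None
  | _, _ => false
  end.

Definition data_connected : Prop := forall a b : vertex, connect data_adj a b.

(* Q = C stacked above A; rows indexed by 'I_p + 'I_m *)
Definition qent (r : 'I_p + 'I_m) (j : 'I_n) : option R :=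
  match r with inl k => Cm I k j | inr i => Aent i j end.

Definition pweight k (r : 'I_k -> 'I_p + 'I_m) (c : 'I_k -> 'I_n) (s : 'S_k)
  : option R := \big[oadd/Some 0]_(i < k) qent (r i) (c (s i)).

(* non-degeneracy: in every square submatrix with finite tropical determinant,
   the maximum over permutations is attained by exactly one permutation *)
Definition nondegenerate_inst : Prop :=
  forall k (r : 'I_k -> 'I_p + 'I_m) (c : 'I_k -> 'I_n),
    injective r -> injective c ->
    forall (s1 s2 : 'S_k) (w1 w2 : R),
      pweight r c s1 = Some w1 -> pweight r c s2 = Some w2 ->
      (forall t w, pweight r c t = Some w -> w <= w1) ->
      (forall t w, pweight r c t = Some w -> w <= w2) ->
      s1 = s2.

(* edges: E1 (u_k, j) = inl (inl (k, j)); E2 (w_i, j) = inl (inr (i, j));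
   E3 (j, w_i) = inr (j, i) *)
Definition edge := ('I_p * 'I_n + 'I_m * 'I_n + 'I_n * 'I_m)%type.

Definition in_edge (x : 'I_n -> R) (e : edge) : bool :=
  match e with
  | inl (inl (k, j)) => tmaxv (Cm I k) x == omap (fun v => v + x j) (Cm I k j)
  | inl (inr (i, j)) => tmaxv (Aent i) x == omap (fun v => v + x j) (Am I i j)
  | inr (j, i) => tmaxv (Aent i) x == omap (fun v => v + x j) (Ap I i j)
  end.

Definition ends (e : edge) : vertex * vertex :=
  match e with
  | inl (inl (k, j)) => (vu k, vv j)
  | inl (inr (i, j)) => (vw i, vv j)
  | inr (j, i) => (vv j, vw i)
  end.

(* adjacency of the underlying undirected (multi)graph of G(x),
   with the edge ex removed when ex = Some e *)
Definition tadj (x : 'I_n -> R) (ex : option edge) : rel vertex := fun a b =>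
  [exists e : edge, [&& in_edge x e, Some e != ex &
     (ends e == (a, b)) || (ends e == (b, a))]].

(* underlying undirected graph of G(x) is a spanning tree (on all of
   U ∪ V ∪ W): connected, and removing any edge disconnects its endpoints *)
Definition spanning_tree (x : 'I_n -> R) : Prop :=
  (forall a b : vertex, connect (tadj x None) a b) /\
  (forall e : edge, in_edge x e ->
     ~~ connect (tadj x (Some e)) (ends e).1 (ends e).2).

Definition uw_end (e : edge) : vertex :=
  match e with
  | inl (inl (k, _)) => vu k
  | inl (inr (i, _)) => vw i
  | inr (_, i) => vw i
  end.

Definition VT (x : 'I_n -> R) (e : edge) : {set 'I_n} :=
  [set j | connect (tadj x (Some e)) (uw_end e) (vv j)].

Definition Nminus (x : 'I_n -> R) (i : 'I_m) : {set 'I_n} :=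
  [set j | in_edge x (inr (j, i))].

Definition in_Ecirc (x : 'I_n -> R) (e : edge) : bool :=
  match e with
  | inr (j, i) => in_edge x e && (1 < #|Nminus x i|)%N
  | _ => in_edge x e
  end.

Definition shift (x : 'I_n -> R) (J : {set 'I_n}) (d : R) : 'I_n -> R :=
  fun j => x j + (if j \in J then d else 0).

(* d < eps(x): d is smaller than every positive value among the differences
   |(a_{i,j1}+x_{j1}) - (a_{i,j2}+x_{j2})| and |(c_{k,j1}+x_{j1}) - (c_{k,j2}+x_{j2})|
   (finite entries only); if there is no positive value, eps(x) = +oo *)
Definition below_eps (x : 'I_n -> R) (d : R) : Prop :=
  (forall i j1 j2 a1 a2, Aent i j1 = Some a1 -> Aent i j2 = Some a2 ->
     0 < `|(a1 + x j1) - (a2 + x j2)| -> d < `|(a1 + x j1) - (a2 + x j2)|) /\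
  (forall k j1 j2 c1 c2, Cm I k j1 = Some c1 -> Cm I k j2 = Some c2 ->
     0 < `|(c1 + x j1) - (c2 + x j2)| -> d < `|(c1 + x j1) - (c2 + x j2)|).

Definition feasible_descent (x : 'I_n -> R) (J : {set 'I_n}) : Prop :=
  forall d : R, 0 < d -> below_eps x d ->
    inS (shift x J d) /\ fobj (shift x J d) < fobj x.

Definition local_optimum (x : 'I_n -> R) : Prop :=
  exists2 d : R, 0 < d &
    forall y : 'I_n -> R, inS y -> (forall j, `|x j - y j| < d) ->
      fobj x <= fobj y.

End TropLP.

From Pilot Require Import Defs.
From HB Require Import structures.
From mathcomp Require Import all_boot all_order all_algebra perm.
From mathcomp Require Import reals.
From mathcomp Require Import lra.

Set Implicit Arguments.
Unset Strict Implicit.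
Unset Printing Implicit Defensive.

Import Order.TTheory GRing.Theory Num.Theory.
Local Open Scope ring_scope.

(* Weight u_k by mu^+_k, the variable j by -mu^-_j and w_i by 0; by balance the weights
   sum to zero.  For an edge e of the tree G(x) let phi(e) be the weight of T(e, x).
   Raising x by d < eps(x) on V(T(e, x)) raises only the maxima of the rows on that
   side, each by at most d, so f(x + d chi) <= f(x) + d phi(e); for e in E°(x) the
   moved point stays in S.  Hence an edge of E°(x) with phi(e) < 0 gives the direction.
   Otherwise phi >= 0 on E°(x).  For y in S near x, f(y) - f(x) is the weighted sum of
   the increments of the row maxima and of the coordinates, which flow conservation on
   the tree rewrites as the sum over e of phi(e) times the difference of the increments
   at the two ends of e.  Taking at w_i the largest increment over its in-neighbours
   makes every term nonnegative (feasibility of y handles E2-edges, and an E3-edge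
   outside E°(x) is the only in-edge of its w_i), so x is a local optimum. *)

(** * Maxima of tropical rows *)

Section RowMaxima.
Variables (R : realType) (n : nat).
Implicit Types (a b : 'I_n -> option R) (y : 'I_n -> R).

Lemma omax_some (o1 o2 : option R) v :
  omax o1 o2 = Some v -> o1 = Some v \/ o2 = Some v.
Proof.
case: o1 => [c1|]; case: o2 => [c2|] //= [<-]; [|by left|by right].
by rewrite /Num.max; case: ifP; [right|left].
Qed.

Lemma omax_gel (o1 o2 : option R) c :
  o1 = Some c -> exists2 v, omax o1 o2 = Some v & c <= v.
Proof.
move=> ->; case: o2 => [c2|] /=; last by exists c.
by exists (Num.max c c2); rewrite // le_max lexx.
Qed.

Lemma omax_ger (o1 o2 : option R) c :
  o2 = Some c -> exists2 v, omax o1 o2 = Some v & c <= v.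
Proof.
move=> ->; case: o1 => [c1|] /=; last by exists c.
by exists (Num.max c1 c); rewrite // le_max lexx orbT.
Qed.

Lemma tmaxv_attained a y v :
  tmaxv a y = Some v -> exists j, exists2 c, a j = Some c & v = c + y j.
Proof.
rewrite /tmaxv; elim/big_rec: _ v => // j o _ IH v /omax_some [|/IH //].
by case aj: (a j) => [c|] //= [<-]; exists j, c.
Qed.

Lemma tmaxv_ge a y j c : a j = Some c -> exists2 v, tmaxv a y = Some v & c + y j <= v.
Proof.
move=> aj; rewrite /tmaxv; elim: (index_enum _) (mem_index_enum j) => // k s IH.
rewrite in_cons big_cons => /orP [/eqP <-|/IH [v sv cv]]; first by apply: omax_gel; rewrite aj.
have [w -> vw] := omax_ger (omap (fun v => v + y k) (a k)) sv.
by exists w => //; apply: le_trans cv vw.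
Qed.

Lemma tmaxv_le a y v B :
  tmaxv a y = Some v -> (forall j c, a j = Some c -> c + y j <= B) -> v <= B.
Proof. by case/tmaxv_attained => j [c aj ->]; apply. Qed.

Definition tmax a y := odflt 0 (tmaxv a y).

Lemma tmaxvE a y j c : a j = Some c -> tmaxv a y = Some (tmax a y).
Proof. by case/(tmaxv_ge y) => v; rewrite /tmax => ->. Qed.

Lemma tmax_ge a y j c : a j = Some c -> c + y j <= tmax a y.
Proof. by move=> aj; have [v] := tmaxv_ge y aj; rewrite /tmax => ->. Qed.

Lemma tmax_attained a y j c :
  a j = Some c -> exists j', exists2 c', a j' = Some c' & tmax a y = c' + y j'.
Proof. by move=> /(tmaxvE y); apply: tmaxv_attained. Qed.

Lemma ole_tmaxv a b y M :
  (forall j c, a j = Some c -> c + y j <= M) ->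
  (exists j, exists2 c, b j = Some c & M <= c + y j) ->
  ole (tmaxv a y) (tmaxv b y).
Proof.
move=> aM [j [c bj Mc]]; have [v -> cv] := tmaxv_ge y bj.
case av: (tmaxv a y) => [u|] //=.
exact: le_trans (tmaxv_le av aM) (le_trans Mc cv).
Qed.

Definition row_gap a y d := forall j1 j2 c1 c2, a j1 = Some c1 -> a j2 = Some c2 ->
  0 < `|(c1 + y j1) - (c2 + y j2)| -> d < `|(c1 + y j1) - (c2 + y j2)|.

Lemma tmax_gap a y d j c :
  row_gap a y d -> a j = Some c -> c + y j < tmax a y -> c + y j + d < tmax a y.
Proof.
move=> gap aj lt_max; have [j' [c' aj' max_eq]] := tmax_attained y aj.
have neg : (c + y j) - (c' + y j') < 0 by rewrite -max_eq subr_lt0.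
have := gap _ _ _ _ aj aj'; rewrite ltr0_norm // oppr_gt0 => /(_ neg).
rewrite -max_eq; lra.
Qed.

Lemma exists_pos_lt_pos (T : finType) (g : T -> R) :
  exists2 d, 0 < d & forall t, 0 < g t -> d < g t.
Proof.
pose d := \big[Num.min/1]_(t | 0 < g t) g t.
have d_gt0 : 0 < d by elim/big_ind: d => //= u v; rewrite lt_min => -> ->.
exists (d / 2) => [|t gt_gt0]; first by rewrite divr_gt0.
have : d <= g t by rewrite /d (bigD1 t) //= ge_min lexx.
lra.
Qed.

Lemma exists_row_gap (T : finType) (a : T -> 'I_n -> option R) y :
  exists2 d, 0 < d & forall t, row_gap (a t) y d.
Proof.
pose g (u : T * 'I_n * 'I_n) := let: (t, j1, j2) := u in
  if (a t j1, a t j2) is (Some c1, Some c2) then `|(c1 + y j1) - (c2 + y j2)| else 0.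
have [d d_gt0 dg] := exists_pos_lt_pos g.
by exists d => // t j1 j2 c1 c2 aj1 aj2; have := dg (t, j1, j2); rewrite /g aj1 aj2.
Qed.

End RowMaxima.

(** * Flows on spanning trees *)

Lemma connect_avoid (T : finType) (G G' : rel T) c a b :
  (forall u w, G u w -> G' u w \/ u = c \/ w = c) ->
  connect G a b -> connect G' a b \/ connect G a c.
Proof.
move=> GG' /connectP [s pth ->]; elim: s a pth => [|a1 s IH] a /=; first by left.
case/andP=> Gaa1 /IH [G'a1b|Ga1c]; last by right; apply: connect_trans (connect1 Gaa1) Ga1c.
have [G'aa1|[->|a1c]] := GG' _ _ Gaa1.
- by left; apply: connect_trans (connect1 G'aa1) G'a1b.
- by right.
- by right; rewrite -a1c connect1.
Qed.

Section TreeFlow.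
Variables (V E : finType) (endp : E -> V * V) (present : pred E).

Definition graph_adj (ex : option E) : rel V := fun a b =>
  [exists e, [&& present e, Some e != ex & (endp e == (a, b)) || (endp e == (b, a))]].

Definition incident (v : V) (e : E) := ((endp e).1 == v) || ((endp e).2 == v).

Definition other (e : E) (v : V) := if (endp e).1 == v then (endp e).2 else (endp e).1.

Lemma graph_adj_sym ex : symmetric (graph_adj ex).
Proof.
move=> a b; apply/existsP/existsP => -[e /and3P [pe ex_e ab]]; exists e;
  by rewrite pe ex_e orbC.
Qed.

Lemma connect_graph_sym ex : connect_sym (graph_adj ex).
Proof. exact/sym_connect_sym/graph_adj_sym. Qed.

Lemma incidentE e a v : incident a e -> incident v e = (v == a) || (v == other e a).
Proof.
rewrite /incident /other; case: (endp e) => b c /=.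
by case: (eqVneq b a) => [->|_] /= => [_|/eqP ->]; rewrite !(eq_sym v) // orbC.
Qed.

Lemma graph_adj_other ex e v :
  present e -> Some e != ex -> incident v e -> graph_adj ex v (other e v).
Proof.
move=> pe ex_e; rewrite /incident /other => ve; apply/existsP; exists e.
rewrite pe ex_e /=; case: (endp e) ve => b c /=.
by case: (eqVneq b v) => [->|_] /= => [_|/eqP ->]; rewrite eqxx ?orbT.
Qed.

Lemma connect_other ex e a v : present e -> Some e != ex -> incident v e ->
  connect (graph_adj ex) a v = connect (graph_adj ex) a (other e v).
Proof.
by move=> pe ex_e ve; apply/(same_connect_r (connect_graph_sym ex))/connect1/graph_adj_other.
Qed.

Lemma graph_adj_remove ex e a b : graph_adj ex a b ->
  graph_adj (Some e) a b \/ (endp e == (a, b)) || (endp e == (b, a)).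
Proof.
case/existsP => f /and3P [pf _ ab]; case: (eqVneq f e) => [<-|fe]; first by right.
by left; apply/existsP; exists f; rewrite pf fe.
Qed.

Lemma ends_incident e a b :
  (endp e == (a, b)) || (endp e == (b, a)) -> incident a e && incident b e.
Proof. by rewrite /incident => /orP [] /eqP ->; rewrite !eqxx ?orbT. Qed.

Hypothesis tree_connected : forall a b, connect (graph_adj None) a b.
Hypothesis tree_bridge :
  forall e, present e -> ~~ connect (graph_adj (Some e)) (endp e).1 (endp e).2.

Lemma bridge_other e v :
  present e -> incident v e -> ~~ connect (graph_adj (Some e)) v (other e v).
Proof.
move/tree_bridge; rewrite /incident /other; case: (endp e) => b c /=.
by case: (eqVneq b v) => [->|_] // nbc /eqP cv; rewrite connect_graph_sym -cv.
Qed.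

Lemma other_neq e v : present e -> incident v e -> other e v != v.
Proof.
by move=> pe ve; apply: contraNneq (bridge_other pe ve) => ->; apply: connect0.
Qed.

Lemma connect_cut e v y : present e -> incident v e ->
  connect (graph_adj (Some e)) v y || connect (graph_adj (Some e)) (other e v) y.
Proof.
move=> pe ve; pose P := [pred z | connect (graph_adj (Some e)) v z
                                  || connect (graph_adj (Some e)) (other e v) z].
have closedP : closed (graph_adj None) P.
  apply: (intro_closed (connect_graph_sym None)) => a b /(graph_adj_remove e) [ab|eab].
    by rewrite !inE => /orP [] /connect_trans -> //; rewrite ?orbT // connect1.
  have /andP [_] := ends_incident eab.
  by rewrite (incidentE _ ve) !inE => /orP [] /eqP ->; rewrite connect0 ?orbT.
by have := closed_connect closedP (tree_connected v y); rewrite !inE connect0 => <-.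
Qed.

Lemma connect_cut_side e a y : present e -> incident a e ->
  connect (graph_adj (Some e)) a y = ~~ connect (graph_adj (Some e)) (other e a) y.
Proof.
move=> pe ae; apply/idP/idP => [ay|/negbTE noy]; first apply/negP => oy.
  by move: (bridge_other pe ae); rewrite (connect_trans ay) // connect_graph_sym.
by have := connect_cut y pe ae; rewrite noy orbF.
Qed.

Lemma cut_edge_exists v y : y != v ->
  exists e, [&& present e, incident v e & ~~ connect (graph_adj (Some e)) v y].
Proof.
pose P := [pred z | (z == v) ||
  [exists e, [&& present e, incident v e & ~~ connect (graph_adj (Some e)) v z]]].
have closedP : closed (graph_adj None) P.
  apply: (intro_closed (connect_graph_sym None)) => a b ab.
  rewrite !inE; case: (eqVneq b v) => [//|bv] /=.
  case: (eqVneq a v) => [av _|av /= /existsP [e /and3P [pe ve nva]]].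
    case/existsP: ab => f /and3P [pf _ /ends_incident /andP [af bf]].
    have vf : incident v f by rewrite -av.
    move: bf; rewrite (incidentE _ vf) (negbTE bv) /= => /eqP ->.
    by apply/existsP; exists f; rewrite pf vf bridge_other.
  apply/existsP; exists e; rewrite pe ve /=.
  case: (graph_adj_remove e ab) => [eab|/ends_incident /andP [ae be]].
    by apply: contra nva => /connect_trans; apply; rewrite connect1 // graph_adj_sym.
  move: ae be; rewrite !(incidentE _ ve) (negbTE av) (negbTE bv) /=.
  by move=> /eqP ao /eqP bo; rewrite bo -ao.
move=> yv; have := closed_connect closedP (tree_connected v y).
by rewrite !inE eqxx (negbTE yv) => /esym /existsP.
Qed.

Lemma cut_edge_unique v y e1 e2 : present e1 -> present e2 ->
  incident v e1 -> incident v e2 ->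
  ~~ connect (graph_adj (Some e1)) v y -> ~~ connect (graph_adj (Some e2)) v y -> e1 = e2.
Proof.
move=> pe1 pe2 ve1 ve2 nvy1 nvy2; apply: contraNeq nvy1 => ne.
have oy : connect (graph_adj (Some e2)) (other e2 v) y.
  by rewrite -[_ y]negbK -connect_cut_side.
have avoid u w : graph_adj (Some e2) u w -> graph_adj (Some e1) u w \/ u = v \/ w = v.
  case/(graph_adj_remove e1) => [|uw]; first by left.
  right; move: ve1; rewrite /incident.
  by case/orP: uw => /eqP -> /= /orP [] /eqP ->; [left|right|right|left].
case: (connect_avoid avoid oy) => [|ov].
  apply: connect_trans; rewrite connect1 // graph_adj_other // eq_sym.
  by apply: contraNneq ne => -[->].
by move: (bridge_other pe2 ve2); rewrite connect_graph_sym ov.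
Qed.

Lemma cut_edge_pred1 v y : y != v -> exists e0,
  [pred e | present e && incident v e && ~~ connect (graph_adj (Some e)) v y] =1 pred1 e0.
Proof.
move=> yv; case: (cut_edge_exists yv) => e0 /and3P [pe0 ve0 nvy0]; exists e0 => e /=.
apply/andP/eqP => [[/andP [pe ve] nvy]|->]; last by rewrite pe0 ve0.
exact: cut_edge_unique pe pe0 ve ve0 nvy nvy0.
Qed.

Section Flow.
Variables (R : pzRingType) (w : V -> R) (src : E -> V).
Hypothesis w_sum0 : \sum_v w v = 0.
Hypothesis src_incident : forall e, incident (src e) e.

Local Notation dst e := (other e (src e)).

Definition tree_flow e := \sum_(y | connect (graph_adj (Some e)) (src e) y) w y.

Lemma sum_cut_weights v :
  \sum_(e | present e && incident v e) \sum_(y | ~~ connect (graph_adj (Some e)) v y) w y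
  = - w v.
Proof.
under eq_bigr do rewrite big_mkcond.
rewrite exchange_big /= (bigD1 v) //= big1 ?add0r => [|e _]; last by rewrite connect0.
have := w_sum0; rewrite (bigD1 v) //= => /eqP; rewrite addrC addr_eq0 => /eqP <-.
apply: eq_bigr => y yv; have [e0 cut_e0] := cut_edge_pred1 yv.
by rewrite -big_mkcondr (eq_bigl _ _ cut_e0) big_pred1_eq.
Qed.

Lemma tree_flow_src e :
  tree_flow e = - \sum_(y | ~~ connect (graph_adj (Some e)) (src e) y) w y.
Proof.
apply/eqP; rewrite -addr_eq0; move: w_sum0.
by rewrite (bigID (connect (graph_adj (Some e)) (src e))) => ->.
Qed.

Lemma tree_flow_dst e : present e ->
  tree_flow e = \sum_(y | ~~ connect (graph_adj (Some e)) (dst e) y) w y.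
Proof. by move=> pe; apply: eq_bigl => y; rewrite connect_cut_side. Qed.

Lemma flow_conservation v : w v =
  \sum_(e | present e && (src e == v)) tree_flow e
  - \sum_(e | present e && (dst e == v)) tree_flow e.
Proof.
rewrite -[w v]opprK -sum_cut_weights (bigID (fun e => src e == v)) /= opprD -sumrN.
congr (_ - _); apply: eq_big => e.
- by rewrite -andbA; congr (_ && _); apply: andb_idl => /eqP <-.
- by case/andP=> [_ /eqP <-]; rewrite tree_flow_src.
- rewrite (incidentE _ (src_incident e)) [v == _]eq_sym; case pe: (present e) => //=.
  have := other_neq pe (src_incident e).
  by case: (eqVneq (src e) v) => [<- /negbTE ->|]; rewrite ?eqxx ?andbT.
- case/andP=> [/andP [pe]]; rewrite (incidentE _ (src_incident e)) eq_sym => /orP [-> //|].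
  by move=> /eqP -> _; rewrite tree_flow_dst.
Qed.

Lemma tree_flow_identity (beta : V -> R) :
  \sum_(e | present e) (beta (src e) - beta (dst e)) * tree_flow e
  = \sum_v beta v * w v.
Proof.
under [RHS]eq_bigr => v _ do rewrite flow_conservation mulrBr !mulr_sumr.
rewrite sumrB; under eq_bigr => e _ do rewrite mulrBl.
rewrite sumrB; congr (_ - _).
- rewrite (partition_big src predT) //=.
  by apply: eq_bigr => v _; apply: eq_bigr => e /andP [_ /eqP ->].
- rewrite (partition_big (fun e => dst e) predT) //=.
  by apply: eq_bigr => v _; apply: eq_bigr => e /andP [_ /eqP ->].
Qed.

End Flow.
End TreeFlow.

(** * Descent along the sides of the tangent tree *)

Section Descent.
Variables (R : realType) (m n p : nat) (I : instance R m n p) (x : 'I_n -> R).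
Hypothesis rowsI : rows_finite I.

Definition weight (v : vertex m n p) : R :=
  match v with
  | inl (inl k) => (Defs.mup I k)%:R
  | inl (inr j) => - (mum I j)%:R
  | inr _ => 0
  end.

Definition edge_flow (e : edge m n p) : R :=
  tree_flow (@ends m n p) (in_edge I x) weight (@uw_end m n p) e.

Definition vidx (e : edge m n p) : 'I_n :=
  match e with inl (inl (_, j)) | inl (inr (_, j)) | inr (j, _) => j end.

Lemma uw_end_incident e : incident (@ends m n p) (uw_end e) e.
Proof. by case: e => [[[k j]|[i j]]|[j i]]; rewrite /incident eqxx ?orbT. Qed.

Lemma other_uw_end e : other (@ends m n p) e (uw_end e) = vv m p (vidx e).
Proof. by case: e => [[[k j]|[i j]]|[j i]]; rewrite /other /= ?eqxx. Qed.

Local Notation side e := (connect (tadj I x (Some e)) (uw_end e)).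
Local Notation amax i := (tmax (Aent I i) x).
Local Notation cmax k := (tmax (Cm I k) x).

Lemma tmaxvA i y : tmaxv (Aent I i) y = Some (tmax (Aent I i) y).
Proof. by have [j] := rowsI.1 i; case aij: (Aent I i j) => [c|] // _; apply: tmaxvE aij. Qed.

Lemma tmaxvC k y : tmaxv (Cm I k) y = Some (tmax (Cm I k) y).
Proof. by have [j] := rowsI.2 k; case ckj: (Cm I k j) => [c|] // _; apply: tmaxvE ckj. Qed.

Lemma in_edge1P k j :
  in_edge I x (inl (inl (k, j))) <-> exists2 c, Cm I k j = Some c & cmax k = c + x j.
Proof.
rewrite /= tmaxvC; split=> [|[c -> /= <-] //].
by case: (Cm I k j) => [c|] //= /eqP [tight]; exists c.
Qed.

Lemma in_edge2P i j :
  in_edge I x (inl (inr (i, j))) <-> exists2 c, Am I i j = Some c & amax i = c + x j.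
Proof.
rewrite /= tmaxvA; split=> [|[c -> /= <-] //].
by case: (Am I i j) => [c|] //= /eqP [tight]; exists c.
Qed.

Lemma in_edge3P i j :
  in_edge I x (inr (j, i)) <-> exists2 c, Ap I i j = Some c & amax i = c + x j.
Proof.
rewrite /= tmaxvA; split=> [|[c -> /= <-] //].
by case: (Ap I i j) => [c|] //= /eqP [tight]; exists c.
Qed.

Lemma Aent_ge_Ap i j c : Ap I i j = Some c -> exists2 b, Aent I i j = Some b & c <= b.
Proof. exact: omax_gel. Qed.

Lemma Aent_ge_Am i j c : Am I i j = Some c -> exists2 b, Aent I i j = Some b & c <= b.
Proof. exact: omax_ger. Qed.

Lemma tight_Aent_edge i j b : Aent I i j = Some b -> amax i = b + x j ->
  in_edge I x (inl (inr (i, j))) || in_edge I x (inr (j, i)).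
Proof.
case/omax_some => [apij|amij] tight; apply/orP.
  by right; apply/in_edge3P; exists b.
by left; apply/in_edge2P; exists b.
Qed.

Lemma inS_Aent y i j b : inS I y -> Aent I i j = Some b ->
  exists2 v, tmaxv (Ap I i) y = Some v & b + y j <= v.
Proof.
move=> yS /omax_some [/(tmaxv_ge y) //|/(tmaxv_ge y) [u amy bu]].
have := yS i; rewrite /ole amy; case: tmaxv => [v|] // uv.
by exists v => //; apply: le_trans bu uv.
Qed.

Hypothesis xS : inS I x.

Lemma exists_in_edge3 i : exists j, in_edge I x (inr (j, i)).
Proof.
have [j0 [b0 aij0 tight0]] := tmaxv_attained (tmaxvA i x).
have [v apx le_v] := inS_Aent xS aij0.
have [j [a apij va]] := tmaxv_attained apx.
exists j; apply/in_edge3P; exists a => //.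
have [b aij ab] := Aent_ge_Ap apij.
have := tmax_ge x aij; lra.
Qed.

Lemma side_edge e f :
  in_edge I x f -> f != e -> side e (uw_end f) = side e (vv m p (vidx f)).
Proof. by move=> f_in fe; rewrite -other_uw_end; apply: connect_other (uw_end_incident f). Qed.

Lemma side_uw_end e f : in_edge I x f -> side e (vv m p (vidx f)) -> side e (uw_end f).
Proof.
by move=> f_in; case: (eqVneq f e) => [-> _|fe]; [apply: connect0 | rewrite side_edge].
Qed.

Lemma shiftE e d j :
  shift x (VT I x e) d j = x j + (if side e (vv m p j) then d else 0).
Proof. by rewrite /shift inE. Qed.

Lemma shift_entry_le (a : 'I_n -> option R) (u : vertex m n p) e (d : R) j c :
  0 <= d -> row_gap a x d -> a j = Some c ->
  (tmax a x = c + x j -> side e (vv m p j) -> side e u) ->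
  c + shift x (VT I x e) d j <= tmax a x + (if side e u then d else 0).
Proof.
move=> d_ge0 gap aj; rewrite shiftE; have le := tmax_ge x aj.
case: (side e u) => [_|]; first by case: ifP => _; lra.
case: ifP => [_ tight_side|_ _]; last lra.
have {tight_side} lt : c + x j < tmax a x.
  by rewrite lt_neqAle le andbT; apply/negP => /eqP/esym/tight_side/(_ isT).
by have := tmax_gap gap aj lt; lra.
Qed.

Lemma tmax_C_shift_le e (d : R) k : 0 <= d -> below_eps I x d ->
  tmax (Cm I k) (shift x (VT I x e) d) <= cmax k + (if side e (vu m n k) then d else 0).
Proof.
move=> d_ge0 epsd; apply: tmaxv_le (tmaxvC k _) _ => j c ckj.
apply: shift_entry_le (epsd.2 k) (ckj) _ => // tight.
have kj_in : in_edge I x (inl (inl (k, j))) by apply/in_edge1P; exists c.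
exact: side_uw_end kj_in.
Qed.

Lemma fobj_sub_weight y (beta : vertex m n p -> R) :
  (forall k, beta (vu m n k) = tmax (Cm I k) y - cmax k) ->
  (forall j, beta (vv m p j) = y j - x j) ->
  fobj I y - fobj I x = \sum_v beta v * weight v.
Proof.
move=> betaU betaV; rewrite !big_sumType /=.
rewrite [X in _ = _ + X]big1 ?addr0 => [|i _]; last by rewrite mulr0.
under eq_bigr => k _ do rewrite betaU mulrC mulrBr.
under [X in _ = _ + X]eq_bigr => j _ do rewrite betaV mulrN mulrC mulrBr.
rewrite sumrN !sumrB /fobj; lra.
Qed.

Lemma fobj_shift_le e (d : R) : 0 < d -> below_eps I x d ->
  fobj I (shift x (VT I x e) d) <= fobj I x + d * edge_flow e.
Proof.
move=> d_gt0 epsd; pose y := shift x (VT I x e) d.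
pose beta (v : vertex m n p) := match v with
  | inl (inl k) => tmax (Cm I k) y - cmax k
  | inl (inr j) => y j - x j
  | inr _ => 0
  end.
rewrite -lerBlDl (fobj_sub_weight (beta := beta)) // /edge_flow /tree_flow.
rewrite [X in _ <= _ * X]big_mkcond mulr_sumr; apply: ler_sum => -[[k|j]|i] _ /=.
- have := tmax_C_shift_le e k (ltW d_gt0) epsd.
  case: (side e (vu m n k)) => le; rewrite ?mulr0.
    by apply: ler_wpM2r => //; lra.
  by apply: mulr_le0_ge0 => //; rewrite subr_le0 -[cmax k]addr0.
- by rewrite /y shiftE addrAC subrr add0r; case: (side e (vv m p j)); rewrite ?mulr0 ?mul0r.
- by rewrite if_same !mulr0.
Qed.

Lemma exists_other_in_edge3 e i : in_Ecirc I x e ->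
  exists2 j, in_edge I x (inr (j, i)) & inr (j, i) != e.
Proof.
move=> eE; have [j1 j1_in] := exists_in_edge3 i.
case: (eqVneq (inr (j1, i)) e) => [e_eq|]; last by exists j1.
move: eE; rewrite -e_eq /= => /andP [_ /card_gt1P [a [b [a_in b_in ab]]]].
rewrite !inE in a_in b_in; case: (eqVneq a j1) => [a_eq|a_ne]; last first.
  by exists a => //; apply: contraNneq a_ne => -[->].
by exists b => //; apply: contraNneq ab => -[->]; rewrite a_eq.
Qed.

Lemma shift_inS e (d : R) : in_Ecirc I x e -> 0 < d -> below_eps I x d ->
  inS I (shift x (VT I x e) d).
Proof.
move=> eE d_gt0 epsd i.
apply: (ole_tmaxv (M := amax i + if side e (vw n p i) then d else 0)).
  move=> j c amij; have [b aij cb] := Aent_ge_Am amij.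
  apply: (le_trans _ (shift_entry_le (u := vw n p i) (ltW d_gt0) (epsd.1 i) (aij) _)).
    by rewrite lerD2r.
  by move=> tight sj; case/orP: (tight_Aent_edge aij tight) => f_in;
    apply: side_uw_end f_in sj.
case: ifP => [si|_].
  have [j j_in je] := exists_other_in_edge3 i eE.
  have [c apij tight] := (in_edge3P i j).1 j_in.
  by exists j, c => //; rewrite shiftE -(side_edge j_in je) /= si tight addrA.
have [j j_in] := exists_in_edge3 i; have [c apij tight] := (in_edge3P i j).1 j_in.
by exists j, c => //; rewrite shiftE tight; case: ifP => _; lra.
Qed.

Lemma descent_of_flow_lt0 e : in_Ecirc I x e -> edge_flow e < 0 ->
  feasible_descent I x (VT I x e).
Proof.
move=> eE flow_lt0 d d_gt0 epsd; split; first exact: shift_inS.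
have := fobj_shift_le e d_gt0 epsd.
have : d * edge_flow e < 0 by rewrite pmulr_rlt0.
lra.
Qed.

(** * Local optimality when all flows on E°(x) are nonnegative *)

Section NearPoint.
Variables (y : 'I_n -> R) (d0 : R).
Hypotheses (yS : inS I y) (y_near : forall j, `|x j - y j| < d0).
Hypothesis gap2 : below_eps I x (d0 + d0).

Lemma near_in_edge3 i j a : Ap I i j = Some a -> tmaxv (Ap I i) y = Some (a + y j) ->
  in_edge I x (inr (j, i)).
Proof.
move=> apij maxy; apply/in_edge3P; exists a => //.
have [b aij ab] := Aent_ge_Ap apij.
have [v] := inS_Aent yS aij; rewrite maxy => -[<-] ba.
have {ab ba} a_eq : a = b by apply/le_anti; rewrite ab -(lerD2r (y j)) ba.
subst a; apply/eqP; rewrite eq_le (tmax_ge _ aij) andbT leNgt; apply/negP => lt.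
have := tmax_gap (gap2.1 i) aij lt.
have [j0 [b0 aij0 ->]] := tmax_attained x aij.
have [v0] := inS_Aent yS aij0; rewrite maxy => -[<-].
move: (y_near j) (y_near j0); rewrite !ltr_norml => /andP [? ?] /andP [? ?]; lra.
Qed.

Lemma in_edge2_gain_le i j : in_edge I x (inl (inr (i, j))) ->
  exists2 j', in_edge I x (inr (j', i)) & y j - x j <= y j' - x j'.
Proof.
case/in_edge2P => c amij tight; have [u amy cu] := tmaxv_ge y amij.
have := yS i; rewrite /ole amy; case apy: (tmaxv (Ap I i) y) => [v|] // uv.
have [j' [a apij' v_eq]] := tmaxv_attained apy; rewrite v_eq in apy uv.
have j'_in := near_in_edge3 apij' apy; exists j' => //.
have [a' apij'' tight'] := (in_edge3P i j').1 j'_in.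
move: apij''; rewrite apij' => -[a_eq]; rewrite -a_eq in tight'; lra.
Qed.

Variable top : 'I_m -> 'I_n.
Hypothesis top_in : forall i, in_edge I x (inr (top i, i)).
Hypothesis top_max :
  forall i j, in_edge I x (inr (j, i)) -> y j - x j <= y (top i) - x (top i).

(* The value at w_i is irrelevant to [fobj_sub_weight], as w_i has weight 0. *)
Definition gain (v : vertex m n p) : R :=
  match v with
  | inl (inl k) => tmax (Cm I k) y - cmax k
  | inl (inr j) => y j - x j
  | inr i => y (top i) - x (top i)
  end.

Lemma gain_edge_ge0 e : (forall e, in_Ecirc I x e -> 0 <= edge_flow e) ->
  in_edge I x e -> 0 <= (gain (uw_end e) - gain (vv m p (vidx e))) * edge_flow e.
Proof.
move=> flow_ge0; case: e => [[[k j]|[i j]]|[j i]] /= e_in.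
- apply: mulr_ge0; last exact: flow_ge0.
  have [c ckj tight] := (in_edge1P k j).1 e_in.
  by have := tmax_ge y ckj; rewrite subr_ge0; lra.
- apply: mulr_ge0; last exact: flow_ge0.
  have [j' j'_in le] := in_edge2_gain_le e_in.
  by have := top_max j'_in; rewrite subr_ge0; lra.
- case: (boolP (1 < #|Nminus I x i|)%N) => [many|].
    apply: mulr_ge0; first by rewrite subr_ge0 top_max.
    by apply: flow_ge0; rewrite /= e_in many.
  rewrite -leqNgt => /card_le1_eqP one.
  by rewrite (one j (top i)) ?inE ?subrr ?mul0r.
Qed.

End NearPoint.

Lemma exists_below_eps : exists2 d, 0 < d & below_eps I x d.
Proof.
pose row t := match t with inl i => Aent I i | inr k => Cm I k end.
have [d d_gt0 gap] := exists_row_gap row x.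
by exists d => //; split=> [i|k]; [apply: (gap (inl i)) | apply: (gap (inr k))].
Qed.

Hypotheses (balI : balanced I) (treex : spanning_tree I x).

Lemma sum_weight : \sum_v weight v = 0.
Proof.
rewrite !big_sumType /= [X in _ + X]big1 // addr0.
by rewrite sumrN -!natr_sum balI subrr.
Qed.

Lemma edge_flow_identity (beta : vertex m n p -> R) :
  \sum_(e | in_edge I x e) (beta (uw_end e) - beta (vv m p (vidx e))) * edge_flow e
  = \sum_v beta v * weight v.
Proof.
rewrite -(tree_flow_identity treex.1 treex.2 sum_weight uw_end_incident).
by apply: eq_bigr => e _; rewrite other_uw_end.
Qed.

Lemma local_optimum_of_flow_ge0 :
  (forall e, in_Ecirc I x e -> 0 <= edge_flow e) -> local_optimum I x.
Proof.
move=> flow_ge0; have [d d_gt0 epsd] := exists_below_eps.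
exists (d / 2) => [|y yS y_near]; first by rewrite divr_gt0.
have gap2 : below_eps I x (d / 2 + d / 2) by rewrite -splitr.
have /fin_all_exists [top top_spec] : forall i, exists j, in_edge I x (inr (j, i)) /\
    forall j', in_edge I x (inr (j', i)) -> y j' - x j' <= y j - x j.
  move=> i; have [j0 j0_in] := exists_in_edge3 i.
  have := @arg_maxP _ _ _ j0 (fun j => in_edge I x (inr (j, i))) (fun j => y j - x j) j0_in.
  by case=> j; exists j.
rewrite -subr_ge0 (fobj_sub_weight (beta := gain y top)) // -edge_flow_identity.
apply: sumr_ge0 => e e_in.
apply: (gain_edge_ge0 yS y_near gap2 _ _ flow_ge0 e_in) => i; first by case: (top_spec i).
by case: (top_spec i) => _; apply.
Qed.

End Descent.

Theorem theorem5p3 (R : realType) (m n p : nat) (I : instance R m n p)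
  (Hrows : rows_finite I) (Hbal : balanced I) (Hconn : data_connected I)
  (Hnd : nondegenerate_inst I)
  (x : 'I_n -> R) (HxS : inS I x) (Htree : spanning_tree I x) :
  ~ local_optimum I x ->
  exists e : edge m n p, in_Ecirc I x e /\ feasible_descent I x (VT I x e).
Proof.
move=> not_opt.
have [/existsP [e /andP [eE flow_lt0]]|/existsPn flow_ge0] :=
  boolP [exists e, in_Ecirc I x e && (edge_flow I x e < 0)].
  by exists e; split => //; apply: descent_of_flow_lt0.
case: not_opt; apply: local_optimum_of_flow_ge0 => // e eE.
by have := flow_ge0 e; rewrite eE /= -leNgt.
Qed.
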